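(* Let $\lambda$ be a cardinal, let $\langle P,\le\rangle$ and $\langle Q,\le\rangle$ be partially ordered sets and let $\varphi:P\to Q$ be a monotonic function. If $Q$ is $\lambda$-Noetherian and for every $q\in Q$ the fiber $\varphi^{-1}(\{q\})$ (with the induced order) is $\lambda$-Noetherian, then $P$ is $\lambda$-Noetherian.
   Context: A poset is Noetherian if it contains no infinite strictly increasing sequence. For a cardinal $\lambda$, a poset $\langle P,\le\rangle$ is $\lambda$-Noetherian if there is a function $f:P\to\lambda$ such that for every $\xi\in\lambda$ the subposet $f^{-1}(\{\xi\})$ with the restricted order is Noetherian. *)

(* A cardinal lambda is represented by a type L
   (standing for the set of ordinals below lambda; only its cardinality matters). *)

Definition is_partial_order {T : Type} (le : T -> T -> Prop) : Prop :=
  (forall x, le x x) /\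
  (forall x y, le x y -> le y x -> x = y) /\
  (forall x y z, le x y -> le y z -> le x z).

Definition strict {T : Type} (le : T -> T -> Prop) (x y : T) : Prop :=
  le x y /\ x <> y.

Definition Noetherian (T : Type) (le : T -> T -> Prop) : Prop :=
  ~ exists s : nat -> T, forall n, strict le (s n) (s (S n)).

Definition sub_le {T : Type} (A : T -> Prop) (le : T -> T -> Prop)
  (x y : {t : T | A t}) : Prop := le (proj1_sig x) (proj1_sig y).

Definition lambda_Noetherian (L : Type) (T : Type) (le : T -> T -> Prop) : Prop :=
  exists f : T -> L, forall xi : L,
    Noetherian {t : T | f t = xi} (sub_le (fun t => f t = xi) le).

Definition monotonic {P Q : Type} (leP : P -> P -> Prop) (leQ : Q -> Q -> Prop)
  (phi : P -> Q) : Prop := forall x y, leP x y -> leQ (phi x) (phi y).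

(* Colour [p] by the pair formed by the colour of [phi p] in [Q] and the colour of [p]
   in its fibre, then compress pairs of colours back into [L] by a map [L * L -> L]
   with finite fibres: an injection when [L] is Dedekind-infinite (Hessenberg's
   theorem, from Zorn's lemma), the first projection when [L] is Dedekind-finite.
   In one colour class, a strictly increasing sequence has a subsequence along which
   the pair is constant; its image under the monotone [phi] is a nondecreasing
   sequence in a Noetherian colour class of [Q], hence eventually constant, and its
   tail is then strictly increasing in a Noetherian colour class of a single fibre. *)

From Stdlib Require Import Classical ClassicalEpsilon FinFun Arith Lia Cantor.
From mathcomp Require classical_sets boolp.
Import classical_sets (total_on).

(** * Noetherian subsets *)

Definition infinitely_often (P : nat -> Prop) : Prop :=
  forall n, exists m, n < m /\ P m.

Lemma extract_chain (R : nat -> nat -> Prop) :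
  (forall n, exists m, n < m /\ R n m) ->
  exists sigma : nat -> nat, forall k, sigma k < sigma (S k) /\ R (sigma k) (sigma (S k)).
Proof.
  intros Hnext. destruct (choice _ Hnext) as [next Hnext'].
  exists (fun k => Nat.iter k next 0). intros k. apply Hnext'.
Qed.

Lemma infinitely_often_subseq (P : nat -> Prop) :
  infinitely_often P ->
  exists sigma : nat -> nat, (forall k, sigma k < sigma (S k)) /\ (forall k, P (sigma k)).
Proof.
  intros HP. destruct (extract_chain (fun _ m => P m) HP) as [sigma Hsigma].
  exists (fun k => sigma (S k)). split; intros k; apply Hsigma.
Qed.

Lemma increasing_le (sigma : nat -> nat) :
  (forall k, sigma k < sigma (S k)) -> forall i j, i <= j -> sigma i <= sigma j.
Proof.
  intros Hsigma i j Hij. induction Hij as [|j _ IH]; [lia|]. specialize (Hsigma j). lia.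
Qed.

Section PartialOrder.

Context {T : Type} (le : T -> T -> Prop).

Definition Noetherian_on (A : T -> Prop) : Prop :=
  ~ exists s : nat -> T, (forall n, A (s n)) /\ (forall n, strict le (s n) (s (S n))).

Lemma Noetherian_sig (A : T -> Prop) :
  Noetherian {t | A t} (sub_le A le) <-> Noetherian_on A.
Proof.
  split.
  - intros HA [s [HsA Hs]]. apply HA.
    exists (fun n => exist A (s n) (HsA n)). intros n. split; [apply Hs|].
    intros E. apply (proj2 (Hs n)). exact (f_equal (@proj1_sig _ _) E).
  - intros HA [s Hs]. apply HA.
    exists (fun n => proj1_sig (s n)). split; [intros n; apply proj2_sig|].
    intros n. split; [apply Hs|]. intros E. apply (proj2 (Hs n)).
    destruct (s n), (s (S n)). simpl in E. subst. f_equal. apply proof_irrelevance.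
Qed.

Lemma Noetherian_on_sub (A B : T -> Prop) :
  (forall t, A t -> B t) -> Noetherian_on B -> Noetherian_on A.
Proof. intros HAB HB [s [HsA Hs]]. apply HB. exists s. auto. Qed.

Hypothesis le_po : is_partial_order le.

Lemma chain_le (s : nat -> T) :
  (forall n, le (s n) (s (S n))) -> forall i j, i <= j -> le (s i) (s j).
Proof.
  destruct le_po as [Hrefl [_ Htrans]].
  intros Hs i j Hij. induction Hij as [|j _ IH]; eauto.
Qed.

Lemma strict_chain_subseq (s : nat -> T) (sigma : nat -> nat) :
  (forall n, strict le (s n) (s (S n))) -> (forall k, sigma k < sigma (S k)) ->
  forall k, strict le (s (sigma k)) (s (sigma (S k))).
Proof.
  destruct le_po as [_ [Hanti _]].
  intros Hs Hsigma k.
  assert (Hchain : forall i j, i <= j -> le (s i) (s j)).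
  { apply chain_le. intros n. apply Hs. }
  split; [apply Hchain, Nat.lt_le_incl, Hsigma|].
  intros E. apply (proj2 (Hs (sigma k))). apply Hanti; [apply Hs|].
  rewrite E. apply Hchain, Hsigma.
Qed.

Lemma Noetherian_on_stationary (A : T -> Prop) (s : nat -> T) :
  Noetherian_on A -> (forall n, A (s n)) -> (forall n, le (s n) (s (S n))) ->
  exists N, forall n, N <= n -> s n = s N.
Proof.
  intros HA HsA Hs. apply NNPP. intros Hmoving. apply HA.
  assert (Hnext : forall n, exists m, n < m /\ s n <> s m).
  { intros n. apply NNPP. intros Hn. apply Hmoving. exists n. intros m Hm.
    destruct (Nat.eq_dec m n) as [->|Hmn]; [reflexivity|].
    apply NNPP. intros E. apply Hn. exists m. split; [lia|auto]. }
  destruct (extract_chain _ Hnext) as [sigma Hsigma].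
  exists (fun k => s (sigma k)). split; [auto|].
  intros k. destruct (Hsigma k) as [Hlt Hne].
  split; [apply chain_le; [exact Hs | lia] | exact Hne].
Qed.

End PartialOrder.

Lemma Noetherian_on_sub_le {T : Type} (le : T -> T -> Prop) (B : T -> Prop)
    (A : {x | B x} -> Prop) :
  Noetherian_on (sub_le B le) A ->
  Noetherian_on le (fun x => B x /\ forall h : B x, A (exist B x h)).
Proof.
  intros HA [s [Hs Hchain]]. apply HA.
  exists (fun n => exist B (s n) (proj1 (Hs n))). split; [intros n; apply Hs|].
  intros n. split; [apply Hchain|]. intros E. apply (proj2 (Hchain n)).
  exact (f_equal (@proj1_sig _ _) E).
Qed.

Definition sequentially_finite {T : Type} (A : T -> Prop) : Prop :=
  forall s : nat -> T, (forall n, A (s n)) -> exists v, infinitely_often (fun n => s n = v).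

Lemma sequentially_finite_subsingleton {T : Type} (A : T -> Prop) :
  (forall x y, A x -> A y -> x = y) -> sequentially_finite A.
Proof.
  intros HA s Hs. exists (s 0). intros n. exists (S n). split; auto.
Qed.

Lemma sequentially_finite_of_not_Dedekind_infinite (T : Type) :
  ~ (exists e : nat -> T, Injective e) -> sequentially_finite (fun _ : T => True).
Proof.
  intros Hfin s _. apply NNPP. intros Hs. apply Hfin.
  assert (Hleave : forall v, exists N, forall m, N < m -> s m <> v).
  { intros v. apply NNPP. intros Hv. apply Hs. exists v. intros n.
    apply NNPP. intros Hn. apply Hv. exists n. intros m Hm E. apply Hn. eauto. }
  assert (Hbound : forall n, exists N, forall m, N < m -> forall j, j <= n -> s m <> s j).
  { induction n as [|n [N HN]].
    - destruct (Hleave (s 0)) as [N HN]. exists N. intros m Hm j Hj.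
      replace j with 0 by lia. auto.
    - destruct (Hleave (s (S n))) as [N' HN']. exists (max N N'). intros m Hm j Hj.
      destruct (Nat.eq_dec j (S n)) as [->|Hj']; [apply HN' | apply HN]; lia. }
  assert (Hfresh : forall n, exists m, n < m /\ forall j, j <= n -> s m <> s j).
  { intros n. destruct (Hbound n) as [N HN]. exists (S (max n N)).
    split; [lia | apply HN; lia]. }
  destruct (extract_chain _ Hfresh) as [sigma Hsigma].
  assert (Hne : forall i j, i < j -> s (sigma j) <> s (sigma i)).
  { intros i [|j] Hij; [lia|]. apply Hsigma, increasing_le; [apply Hsigma | lia]. }
  exists (fun k => s (sigma k)). intros i j E.
  destruct (Nat.lt_total i j) as [Hij|[Hij|Hij]]; auto;
    [destruct (Hne i j Hij) | destruct (Hne j i Hij)]; auto.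
Qed.

Lemma Noetherian_on_finite_cover {T I : Type} (le : T -> T -> Prop) (h : T -> I)
    (J : I -> Prop) (A : T -> Prop) :
  is_partial_order le -> sequentially_finite J -> (forall t, A t -> J (h t)) ->
  (forall i, Noetherian_on le (fun t => A t /\ h t = i)) -> Noetherian_on le A.
Proof.
  intros Hpo HJ HAJ Hfib [s [HsA Hs]].
  destruct (HJ (fun n => h (s n))) as [i Hi]; [auto|].
  destruct (infinitely_often_subseq _ Hi) as [sigma [Hsigma Hsigmai]].
  apply (Hfib i). exists (fun k => s (sigma k)).
  split; [auto|]. apply strict_chain_subseq; assumption.
Qed.

Lemma Noetherian_on_fibered {P Q : Type} (leP : P -> P -> Prop) (leQ : Q -> Q -> Prop)
    (phi : P -> Q) (A : P -> Prop) (B : Q -> Prop) :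
  is_partial_order leQ -> monotonic leP leQ phi -> (forall p, A p -> B (phi p)) ->
  Noetherian_on leQ B -> (forall q, Noetherian_on leP (fun p => A p /\ phi p = q)) ->
  Noetherian_on leP A.
Proof.
  intros HQ Hphi HAB HB Hfib [s [HsA Hs]].
  destruct (Noetherian_on_stationary leQ HQ B (fun n => phi (s n))) as [N HN]; auto.
  { intros n. apply Hphi, Hs. }
  apply (Hfib (phi (s N))). exists (fun n => s (N + n)). split.
  - intros n. split; [auto | apply HN; lia].
  - intros n. rewrite Nat.add_succ_r. apply Hs.
Qed.

(** * Zorn's lemma for partial maps *)

Lemma Zorn_on {T : Type} (good : T -> Prop) (R : T -> T -> Prop) (t0 : T) :
  good t0 -> (forall t, R t t) -> (forall r s t, R r s -> R s t -> R r t) ->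
  (forall C, (forall t, C t -> good t) -> total_on C R ->
     exists u, good u /\ forall t, C t -> R t u) ->
  exists m, good m /\ forall t, good t -> R m t -> R t m.
Proof.
  intros Ht0 Hrefl Htrans Hchain.
  set (R' := fun s t : {t | good t} => boolp.asbool (R (proj1_sig s) (proj1_sig t))).
  assert (HR' : forall s t, R' s t = true <-> R (proj1_sig s) (proj1_sig t)).
  { split; [apply boolp.asboolW | apply boolp.asboolT]. }
  destruct (classical_sets.ZL_preorder (exist good t0 Ht0) (R := R')) as [[m Hm] Hmax].
  - intros t. apply HR', Hrefl.
  - intros r s t Hrs Hst. apply HR'. apply HR' in Hrs, Hst. eauto.
  - intros C HC.
    destruct (Hchain (fun t => exists h : good t, C (exist good t h))) as [u [Hu Hub]].
    + intros t [h _]. exact h.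
    + intros s t [hs Cs] [ht Ct]. destruct (HC _ _ Cs Ct) as [H|H];
        apply HR' in H; auto.
    + exists (exist good u Hu). intros [t h] Ct. apply HR', Hub. eauto.
  - exists m. split; [exact Hm|]. intros t Ht Hmt.
    apply (HR' (exist good t Ht) (exist good m Hm)), Hmax, HR', Hmt.
Qed.

Definition injective_on {X Y : Type} (D : X -> Prop) (f : X -> Y) : Prop :=
  forall x x', D x -> D x' -> f x = f x' -> x = x'.

Definition maps_into {X Y : Type} (D : X -> Prop) (f : X -> Y) (E : Y -> Prop) : Prop :=
  forall x, D x -> E (f x).

Section PartialMaps.

Context {X Y : Type}.

Definition pmap : Type := ((X -> Prop) * (X -> Y))%type.

Definition extends (t u : pmap) : Prop :=
  (forall x, fst t x -> fst u x) /\ (forall x, fst t x -> snd u x = snd t x).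

Definition union_dom (C : pmap -> Prop) (x : X) : Prop := exists t, C t /\ fst t x.

Definition glue (y0 : Y) (C : pmap -> Prop) (x : X) : Y :=
  snd (epsilon (inhabits ((fun _ => False), (fun _ => y0))) (fun t => C t /\ fst t x)) x.

Lemma extends_refl (t : pmap) : extends t t.
Proof. split; auto. Qed.

Lemma extends_trans (r s t : pmap) : extends r s -> extends s t -> extends r t.
Proof.
  intros [Hrs1 Hrs2] [Hst1 Hst2]. split; auto.
  intros x Hx. rewrite Hst2; auto.
Qed.

Lemma union_dom_common (C : pmap -> Prop) (x x' : X) :
  total_on C extends -> union_dom C x -> union_dom C x' ->
  exists t, C t /\ fst t x /\ fst t x'.
Proof.
  intros HC [t [Ct Hx]] [t' [Ct' Hx']].
  destruct (HC t t' Ct Ct') as [[Hdom _]|[Hdom _]]; eauto.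
Qed.

Lemma glue_agrees (y0 : Y) (C : pmap -> Prop) (t : pmap) (x : X) :
  total_on C extends -> C t -> fst t x -> glue y0 C x = snd t x.
Proof.
  intros HC Ct Hx. unfold glue.
  destruct (epsilon_spec (inhabits ((fun _ => False), (fun _ => y0)))
              (fun t => C t /\ fst t x)) as [Ct' Hx']; [eauto|].
  set (t' := epsilon _ _) in *.
  destruct (HC t t' Ct Ct') as [[_ H]|[_ H]]; [|symmetry]; auto.
Qed.

Lemma glue_extends (y0 : Y) (C : pmap -> Prop) (t : pmap) :
  total_on C extends -> C t -> extends t (union_dom C, glue y0 C).
Proof.
  intros HC Ct. split; intros x Hx; [exists t; auto | apply glue_agrees; auto].
Qed.

Lemma pmap_Zorn (good : pmap -> Prop) (y0 : Y) (t0 : pmap) :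
  good t0 ->
  (forall C, (forall t, C t -> good t) -> total_on C extends -> (exists t, C t) ->
     good (union_dom C, glue y0 C)) ->
  exists m, good m /\ forall t, good t -> extends m t -> forall x, fst t x -> fst m x.
Proof.
  intros Ht0 Hunion.
  assert (Hchain : forall C, (forall t, C t -> good t) -> total_on C extends ->
            exists u, good u /\ forall t, C t -> extends t u).
  { intros C HC Htot. destruct (classic (exists t, C t)) as [HCne|HCe].
    - exists (union_dom C, glue y0 C). split; auto using glue_extends.
    - exists t0. split; [auto|]. intros t Ct. destruct HCe. eauto. }
  destruct (Zorn_on good extends t0 Ht0 extends_refl extends_trans Hchain)
    as [m [Hm Hmax]].
  exists m. split; [auto|]. intros t Ht Hmt. apply Hmax; auto.
Qed.

Definition patch (D : X -> Prop) (f g : X -> Y) (x : X) : Y :=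
  if excluded_middle_informative (D x) then f x else g x.

Lemma patch_in (D : X -> Prop) (f g : X -> Y) (x : X) : D x -> patch D f g x = f x.
Proof. intros Hx. unfold patch. destruct (excluded_middle_informative (D x)); tauto. Qed.

Lemma patch_out (D : X -> Prop) (f g : X -> Y) (x : X) : ~ D x -> patch D f g x = g x.
Proof. intros Hx. unfold patch. destruct (excluded_middle_informative (D x)); tauto. Qed.

Lemma extends_patch (D E : X -> Prop) (f g : X -> Y) :
  (forall x, D x -> E x) -> extends (D, f) (E, patch D f g).
Proof. intros HDE. split; intros x Hx; simpl; [auto | apply patch_in, Hx]. Qed.

Lemma patch_injective_on (D E : X -> Prop) (f g : X -> Y) (A : Y -> Prop) :
  maps_into D f A -> injective_on D f ->
  maps_into (fun x => E x /\ ~ D x) g (fun y => ~ A y) ->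
  injective_on (fun x => E x /\ ~ D x) g ->
  injective_on E (patch D f g).
Proof.
  intros Hf Hfinj Hg Hginj x x' Hx Hx'.
  destruct (classic (D x)) as [HDx|HDx], (classic (D x')) as [HDx'|HDx'];
    rewrite (patch_in D f g x HDx) || rewrite (patch_out D f g x HDx);
    rewrite (patch_in D f g x' HDx') || rewrite (patch_out D f g x' HDx'); intros E'.
  - apply Hfinj; assumption.
  - destruct (Hg x' (conj Hx' HDx')). rewrite <- E'. apply Hf, HDx.
  - destruct (Hg x (conj Hx HDx)). rewrite E'. apply Hf, HDx'.
  - apply Hginj; auto.
Qed.

End PartialMaps.

Definition partial_injection {X Y : Type} (A : X -> Prop) (B : Y -> Prop) (t : @pmap X Y) :=
  (forall x, fst t x -> A x) /\ maps_into (fst t) (snd t) B /\ injective_on (fst t) (snd t).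

Lemma partial_injection_union {X Y : Type} (A : X -> Prop) (B : Y -> Prop) (y0 : Y)
    (C : @pmap X Y -> Prop) :
  (forall t, C t -> partial_injection A B t) -> total_on C extends ->
  partial_injection A B (union_dom C, glue y0 C).
Proof.
  intros HC Htot. split; [|split]; simpl.
  - intros x [t [Ct Hx]]. apply (HC t Ct), Hx.
  - intros x [t [Ct Hx]]. rewrite (glue_agrees y0 C t x Htot Ct Hx). apply (HC t Ct), Hx.
  - intros x x' Hx Hx'. destruct (union_dom_common C x x' Htot Hx Hx') as [t [Ct [Htx Htx']]].
    rewrite (glue_agrees y0 C t x Htot Ct Htx), (glue_agrees y0 C t x' Htot Ct Htx').
    apply (HC t Ct); auto.
Qed.

Lemma embedding_comparable {X Y : Type} (x0 : X) (y0 : Y) (A : X -> Prop) (B : Y -> Prop) :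
  (exists f, maps_into A f B /\ injective_on A f) \/
  (exists g, maps_into B g A /\ injective_on B g).
Proof.
  destruct (pmap_Zorn (partial_injection A B) y0 ((fun _ => False), (fun _ => y0)))
    as [[D f] [[HDA [HfB Hfinj]] Hmax]].
  - split; [|split]; intros x; simpl; tauto.
  - intros C HC Htot _. apply partial_injection_union; assumption.
  - simpl in *.
    destruct (classic (forall x, A x -> D x)) as [HAD|[x Hx]%not_all_ex_not].
    { left. exists f. split; intros x; auto. }
    destruct (classic (forall y, B y -> exists x, D x /\ f x = y))
      as [Hsurj|[y Hy]%not_all_ex_not].
    { right. set (g := fun y => epsilon (inhabits x0) (fun x => D x /\ f x = y)).
      assert (Hg : forall y, B y -> D (g y) /\ f (g y) = y).
      { intros y Hy. apply epsilon_spec, Hsurj, Hy. }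
      exists g. split.
      - intros y Hy. apply HDA, Hg, Hy.
      - intros y y' Hy Hy' E. rewrite <- (proj2 (Hg y Hy)), <- (proj2 (Hg y' Hy')), E.
        reflexivity. }
    exfalso. apply imply_to_and in Hx as [HAx HDx]. apply imply_to_and in Hy as [HBy Hy].
    set (E := fun z => D z \/ z = x).
    apply HDx, (Hmax (E, patch D f (fun _ => y))); [| apply extends_patch; now left | now right].
    split; [|split]; simpl.
    + intros z [Hz| ->]; auto.
    + intros z Hz. destruct (classic (D z)) as [HDz|HDz].
      * rewrite patch_in by assumption. auto.
      * rewrite patch_out by assumption. assumption.
    + apply (patch_injective_on D E f (fun _ => y) (fun y' => y' <> y)); try assumption.
      * intros z Hz E'. apply Hy. eauto.
      * intros z _ Hyy. apply Hyy. reflexivity.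
      * intros z z' [[Hz| ->] HDz] [[Hz'| ->] HDz'] _; tauto.
Qed.

(** * Hessenberg's theorem *)

Section Square.

Context {L : Type}.

Definition diag (D : L * L -> Prop) (a : L) : Prop := D (a, a).

Definition square (D : L * L -> Prop) : Prop := forall a b, D (a, b) <-> diag D a /\ diag D b.

Definition two_copies (A : L -> Prop) (u : L -> L) (a0 a1 x : L) : L * L :=
  if excluded_middle_informative (A x) then (x, a0) else (u x, a1).

Definition encode_pair (f : L * L -> L) (j : L -> L * L) (p : L * L) : L :=
  f (f (j (fst p)), f (j (snd p))).

Lemma two_copies_embedding (D : L * L -> Prop) (S : L -> Prop) (u : L -> L) (a0 a1 : L) :
  square D -> a0 <> a1 -> diag D a0 -> diag D a1 ->
  maps_into (fun x => S x /\ ~ diag D x) u (diag D) ->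
  injective_on (fun x => S x /\ ~ diag D x) u ->
  maps_into S (two_copies (diag D) u a0 a1) D /\ injective_on S (two_copies (diag D) u a0 a1).
Proof.
  intros HD Ha01 Ha0 Ha1 Hu Huinj. unfold two_copies. split.
  - intros x Hx. destruct (excluded_middle_informative (diag D x)); apply HD; auto.
  - intros x x' Hx Hx'.
    destruct (excluded_middle_informative (diag D x)),
             (excluded_middle_informative (diag D x')); intros E; injection E; intros;
      subst; try contradiction; auto.
Qed.

Lemma encode_pair_embedding (D : L * L -> Prop) (S : L -> Prop) (f : L * L -> L) (j : L -> L * L) :
  square D -> maps_into D f (diag D) -> injective_on D f ->
  maps_into S j D -> injective_on S j ->
  maps_into (fun p => S (fst p) /\ S (snd p)) (encode_pair f j) (diag D) /\
  injective_on (fun p => S (fst p) /\ S (snd p)) (encode_pair f j).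
Proof.
  intros HD Hf Hfinj Hj Hjinj.
  assert (Hfj : forall x, S x -> diag D (f (j x))) by (intros x Hx; apply Hf, Hj, Hx).
  unfold encode_pair. split.
  - intros [x y] [Hx Hy]. apply Hf, HD. auto.
  - intros [x y] [x' y'] [Hx Hy] [Hx' Hy'] E. simpl in *.
    apply Hfinj in E; try (apply HD; auto). injection E. intros Ey Ex.
    apply Hfinj, Hjinj in Ex; apply Hfinj, Hjinj in Ey; auto; congruence.
Qed.

Variable e : nat -> L.
Hypothesis e_inj : Injective e.

(* An injection [A * A -> A] is represented by its domain [D = A * A], from which
   [A = diag D] is recovered; containing the range of [e] keeps [A] infinite. *)
Definition square_injection (t : @pmap (L * L) L) : Prop :=
  (forall n, diag (fst t) (e n)) /\ square (fst t) /\
  maps_into (fst t) (snd t) (diag (fst t)) /\ injective_on (fst t) (snd t).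

(* On the range of [e], a copy of [nat], use Cantor's pairing. *)
Lemma square_injection_seed : exists t, square_injection t.
Proof.
  set (R := fun a => exists n, e n = a).
  set (index := fun a => epsilon (inhabits 0) (fun n => e n = a)).
  assert (Hindex : forall n, index (e n) = n).
  { intros n. apply e_inj. unfold index. apply (epsilon_spec _ (fun m => e m = e n)). eauto. }
  exists ((fun p => R (fst p) /\ R (snd p)),
          (fun p => e (Cantor.to_nat (index (fst p), index (snd p))))).
  unfold square_injection, square, maps_into, injective_on, diag, R; cbn [fst snd].
  split; [|split; [|split]].
  - intros n. split; eauto.
  - intros a b. tauto.
  - intros p _. split; eauto.
  - intros [a b] [a' b'] [[i Ha] [j Hb]] [[i' Ha'] [j' Hb']] E. cbn [fst snd] in *. subst.
    apply e_inj, (f_equal Cantor.of_nat) in E. rewrite !Cantor.cancel_of_to, !Hindex in E.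
    injection E. intros. subst. reflexivity.
Qed.

Lemma square_injection_union (C : @pmap (L * L) L -> Prop) :
  (forall t, C t -> square_injection t) -> total_on C extends -> (exists t, C t) ->
  square_injection (union_dom C, glue (e 0) C).
Proof.
  intros HC Htot [t0 Ct0].
  assert (Hglue : forall t p, C t -> fst t p -> glue (e 0) C p = snd t p)
    by (intros; apply glue_agrees; auto).
  split; [|split; [|split]]; simpl.
  - intros n. exists t0. split; [auto | apply (proj1 (HC t0 Ct0))].
  - intros a b. split.
    + intros [t [Ct Hab]]. destruct (HC t Ct) as [_ [Hsq _]].
      apply Hsq in Hab as [Ha Hb]. split; exists t; auto.
    + intros [Ha Hb]. destruct (union_dom_common C _ _ Htot Ha Hb) as [t [Ct [Hta Htb]]].
      destruct (HC t Ct) as [_ [Hsq _]]. exists t. split; [auto | apply Hsq; auto].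
  - intros p [t [Ct Hp]]. destruct (HC t Ct) as [_ [_ [Hmaps _]]].
    exists t. split; [auto|]. rewrite (Hglue t p Ct Hp). apply Hmaps, Hp.
  - intros p p' Hp Hp'. destruct (union_dom_common C _ _ Htot Hp Hp') as [t [Ct [Htp Htp']]].
    destruct (HC t Ct) as [_ [_ [_ Hinj]]].
    rewrite (Hglue t p Ct Htp), (Hglue t p' Ct Htp'). apply Hinj; auto.
Qed.

Lemma e0_neq_e1 : e 0 <> e 1.
Proof. intros E. apply e_inj in E. discriminate. Qed.

(* If [A := diag D] injects into its complement through [h], then [D] can be enlarged
   to the square of [A] plus the copy [h A] of [A]: the new pairs are sent into [h A]
   by [h] after being encoded in [A] by two copies of [A]. *)
Lemma square_injection_extend (D : L * L -> Prop) (f : L * L -> L) (h : L -> L) :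
  square_injection (D, f) ->
  maps_into (diag D) h (fun x => ~ diag D x) -> injective_on (diag D) h ->
  exists t, square_injection t /\ extends (D, f) t /\ exists a, diag (fst t) a /\ ~ diag D a.
Proof.
  intros [Hbase [HD [Hf Hfinj]]] Hh Hhinj. simpl in *.
  set (A := diag D) in *.
  set (E := fun x => exists a, A a /\ h a = x).
  set (S := fun x => A x \/ E x).
  set (u := fun x => epsilon (inhabits (e 0)) (fun a => A a /\ h a = x)).
  assert (Hu : forall x, E x -> A (u x) /\ h (u x) = x) by (intros x Hx; apply epsilon_spec, Hx).
  assert (HSA : forall x, S x -> ~ A x -> E x) by (intros x [Hx|Hx] HnA; tauto).
  set (j := two_copies A u (e 0) (e 1)).
  assert (Hjemb : maps_into S j D /\ injective_on S j).
  { apply two_copies_embedding; auto using e0_neq_e1; try apply Hbase.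
    - intros x [HSx HnA]. apply Hu, HSA; auto.
    - intros x x' [HSx HnA] [HSx' HnA'] E'.
      rewrite <- (proj2 (Hu x (HSA x HSx HnA))), <- (proj2 (Hu x' (HSA x' HSx' HnA'))), E'.
      reflexivity. }
  destruct Hjemb as [Hj Hjinj].
  set (SS := fun p => S (fst p) /\ S (snd p)).
  destruct (encode_pair_embedding D S f j) as [HF HFinj]; auto.
  set (g := fun p => h (encode_pair f j p)).
  assert (HDSS : forall p, D p -> SS p).
  { intros [a b] Hab. apply HD in Hab as [Ha Hb]. split; left; auto. }
  exists (SS, patch D f g). split; [|split; [apply extends_patch, HDSS|]].
  - split; [|split; [|split]]; simpl.
    + intros n. split; left; apply Hbase.
    + intros a b. unfold diag, SS. simpl. tauto.
    + intros p Hp. unfold diag, SS. simpl. destruct (classic (D p)) as [HDp|HDp].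
      * rewrite patch_in by assumption. split; left; apply Hf, HDp.
      * rewrite patch_out by assumption.
        split; right; exists (encode_pair f j p); (split; [apply HF, Hp | reflexivity]).
    + apply (patch_injective_on D SS f g A); try assumption.
      * intros p [Hp _]. apply Hh, HF, Hp.
      * intros p p' [Hp _] [Hp' _] E'. apply HFinj, Hhinj; auto; apply HF; auto.
  - exists (h (e 0)). split.
    + unfold diag, SS, S, E. simpl. split; right; exists (e 0); split; auto.
    + apply Hh, Hbase.
Qed.

(* For a maximal [A], either the complement of [A] injects into [A], and then
   [L] injects into [A * A] and so into [A], or [A] injects into its complement,
   which contradicts maximality. *)
Lemma Dedekind_infinite_square : exists c : L * L -> L, Injective c.
Proof.
  destruct square_injection_seed as [t0 Ht0].
  destruct (pmap_Zorn square_injection (e 0) t0 Ht0 square_injection_union)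
    as [[D f] [Hm Hmax]].
  destruct (embedding_comparable (e 0) (e 0) (fun x => ~ diag D x) (diag D))
    as [[u [Hu Huinj]]|[h [Hh Hhinj]]].
  - destruct Hm as [Hbase [HD [Hf Hfinj]]]. simpl in *.
    set (j := two_copies (diag D) u (e 0) (e 1)).
    assert (Hjemb : maps_into (fun _ => True) j D /\ injective_on (fun _ => True) j).
    { apply two_copies_embedding; auto using e0_neq_e1; try apply Hbase.
      - intros x [_ Hx]. auto.
      - intros x x' [_ Hx] [_ Hx']. auto. }
    destruct Hjemb as [Hj Hjinj].
    destruct (encode_pair_embedding D (fun _ => True) f j) as [_ HFinj]; auto.
    exists (encode_pair f j). intros p p'. apply HFinj; auto.
  - exfalso.
    destruct (square_injection_extend D f h Hm Hh Hhinj) as [t [Ht [Hext [a [Ha HnA]]]]].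
    apply HnA, (Hmax t Ht Hext (a, a) Ha).
Qed.

End Square.

Lemma pairing_with_sequentially_finite_fibers (L : Type) :
  exists c : L * L -> L, forall xi, sequentially_finite (fun p => c p = xi).
Proof.
  destruct (classic (exists e : nat -> L, Injective e)) as [[e He]|Hfin].
  - destruct (Dedekind_infinite_square e He) as [c Hc]. exists c. intros xi.
    apply sequentially_finite_subsingleton. intros p p' Hp Hp'. apply Hc. congruence.
  - exists fst. intros xi s Hs.
    destruct (sequentially_finite_of_not_Dedekind_infinite L Hfin (fun n => snd (s n)))
      as [b Hb]; [auto|].
    exists (xi, b). intros n. destruct (Hb n) as [m [Hm E]]. exists m. split; [auto|].
    rewrite <- (Hs m), <- E. apply surjective_pairing.
Qed.

Theorem lemma1 (L : Type) (P Q : Type) (leP : P -> P -> Prop) (leQ : Q -> Q -> Prop)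
  (phi : P -> Q) :
  is_partial_order leP -> is_partial_order leQ ->
  monotonic leP leQ phi ->
  lambda_Noetherian L Q leQ ->
  (forall q : Q, lambda_Noetherian L {p : P | phi p = q} (sub_le (fun p => phi p = q) leP)) ->
  lambda_Noetherian L P leP.
Proof.
  intros HP HQ Hphi [fQ HfQ] Hfib.
  set (G := fun q => proj1_sig (constructive_indefinite_description _ (Hfib q))).
  assert (HG : forall q b, Noetherian_on (sub_le _ leP) (fun t => G q t = b)).
  { intros q b. apply Noetherian_sig.
    exact (proj2_sig (constructive_indefinite_description _ (Hfib q)) b). }
  set (key := fun p => (fQ (phi p), G (phi p) (exist _ p eq_refl))).
  destruct (pairing_with_sequentially_finite_fibers L) as [c Hc].
  exists (fun p => c (key p)). intros xi. apply Noetherian_sig.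
  apply (Noetherian_on_finite_cover leP key (fun k => c k = xi)); auto.
  intros [a b].
  apply (Noetherian_on_fibered leP leQ phi _ (fun q => fQ q = a)); auto.
  - intros p [_ Hk]. injection Hk. auto.
  - apply Noetherian_sig, HfQ.
  - intros q. eapply Noetherian_on_sub; [|apply Noetherian_on_sub_le, (HG q b)].
    intros p [[_ Hk] Hq]. split; [exact Hq|]. intros h. injection Hk. intros Hb _.
    destruct h. exact Hb.
Qed.
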